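(* Let $f:\mathbb{R}^n\to\mathbb{R}$ be continuously differentiable and bounded below, let $s$ be an integer with $0<s<n$, and let $\{\mathbf{x}^k\}$ be the sequence generated by the greedy sparse-simplex method. Then any accumulation point of $\{\mathbf{x}^k\}$ is a CW-minimum of the problem (P): minimize $f(\mathbf{x})$ subject to $\|\mathbf{x}\|_0\le s$.
   Context: $\|\mathbf{x}\|_0$ is the number of nonzero components, $C_s=\{\mathbf{x}:\|\mathbf{x}\|_0\le s\}$, $I_1(\mathbf{x})=\{i:x_i\neq0\}$, $\mathbf{e}_i$ the $i$-th standard basis vector. Greedy sparse-simplex method (all one-dimensional minima below are assumed attained): choose $\mathbf{x}^0\in C_s$. At step $k$: if $\|\mathbf{x}^k\|_0<s$, for each $i=1,\dots,n$ let $t_i\in\operatorname{argmin}_{t\in\mathbb{R}}f(\mathbf{x}^k+t\mathbf{e}_i)$ and $f_i=\min_t f(\mathbf{x}^k+t\mathbf{e}_i)$; let $i_k\in\operatorname{argmin}_i f_i$; if $f_{i_k}<f(\mathbf{x}^k)$ set $\mathbf{x}^{k+1}=\mathbf{x}^k+t_{i_k}\mathbf{e}_{i_k}$, otherwise stop. If $\|\mathbf{x}^k\|_0=s$, for each $i\in I_1(\mathbf{x}^k)$ and $j=1,\dots,n$ let $t_{i,j}\in\operatorname{argmin}_t f(\mathbf{x}^k-x_i^k\mathbf{e}_i+t\mathbf{e}_j)$ and $f_{i,j}=\min_t f(\mathbf{x}^k-x_i^k\mathbf{e}_i+t\mathbf{e}_j)$; let $(i_k,j_k)\in\operatorname{argmin}\{f_{i,j}:i\in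 I_1(\mathbf{x}^k),j=1,\dots,n\}$; if $f_{i_k,j_k}<f(\mathbf{x}^k)$ set $\mathbf{x}^{k+1}=\mathbf{x}^k-x^k_{i_k}\mathbf{e}_{i_k}+t_{i_k,j_k}\mathbf{e}_{j_k}$, otherwise stop. A feasible $\mathbf{x}^*$ is a coordinate-wise (CW) minimum of (P) if either $\|\mathbf{x}^*\|_0<s$ and $f(\mathbf{x}^* )=\min_t f(\mathbf{x}^*+t\mathbf{e}_i)$ for all $i$; or $\|\mathbf{x}^*\|_0=s$ and $f(\mathbf{x}^* )\le\min_t f(\mathbf{x}^*-x_i^*\mathbf{e}_i+t\mathbf{e}_j)$ for all $i\in I_1(\mathbf{x}^* )$, $j=1,\dots,n$. *)

From HB Require Import structures.
From mathcomp Require Import all_boot all_order all_algebra.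
From mathcomp Require Import all_classical all_reals all_analysis.
Set Implicit Arguments. Unset Strict Implicit. Unset Printing Implicit Defensive.
Import Order.TTheory GRing.Theory Num.Theory.
Import numFieldNormedType.Exports.
Local Open Scope classical_set_scope.
Local Open Scope ring_scope.

Section Defs.
Variables (R : realType) (n : nat).
Notation V := 'rV[R]_n.

Definition norm0 (x : V) : nat := #|[set i : 'I_n | x ord0 i != 0]|.

Definition supp (x : V) : {set 'I_n} := [set i : 'I_n | x ord0 i != 0].

Definition ebasis (i : 'I_n) : V := delta_mx ord0 i.

(* Stopping is encoded as y = x (the sequence then stays
   constant, since the stopping test is repeated with the same outcome). *)
Definition greedy_step (f : V -> R) (s : nat) (x y : V) : Prop :=
  if (norm0 x < s)%N then
    exists (i : 'I_n) (t : R),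
      (forall (i' : 'I_n) (t' : R),
          f (x + t *: ebasis i) <= f (x + t' *: ebasis i')) /\
      y = (if f (x + t *: ebasis i) < f x then x + t *: ebasis i else x)
  else if norm0 x == s then
    exists (i j : 'I_n) (t : R),
      i \in supp x /\
      (forall (i' j' : 'I_n) (t' : R), i' \in supp x ->
          f (x - x ord0 i *: ebasis i + t *: ebasis j)
          <= f (x - x ord0 i' *: ebasis i' + t' *: ebasis j')) /\
      y = (if f (x - x ord0 i *: ebasis i + t *: ebasis j) < f x
           then x - x ord0 i *: ebasis i + t *: ebasis j else x)
  else False.

Definition greedy_seq (f : V -> R) (s : nat) (x : nat -> V) : Prop :=
  (norm0 (x 0%N) <= s)%N /\ forall k, greedy_step f s (x k) (x k.+1).

Definition CW_min (f : V -> R) (s : nat) (x : V) : Prop :=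
  ((norm0 x < s)%N /\
     forall (i : 'I_n) (t : R), f x <= f (x + t *: ebasis i))
  \/
  (norm0 x = s /\
     forall (i j : 'I_n) (t : R), i \in supp x ->
       f x <= f (x - x ord0 i *: ebasis i + t *: ebasis j)).

Definition C1 (f : V -> R) : Prop :=
  (forall x, differentiable f x) /\
  (forall v : V, continuous (fun x => 'd f x v)).

End Defs.

From HB Require Import structures.
From mathcomp Require Import all_boot all_order all_algebra.
From mathcomp Require Import all_classical all_reals all_analysis.
Import Order.TTheory GRing.Theory Num.Theory.
Import numFieldNormedType.Exports.
Local Open Scope classical_set_scope.
Local Open Scope ring_scope.

(* The values f(x^k) are nonincreasing, so f(p) <= f(x^k) for every k at an
   accumulation point p, and near p every support contains that of p. If p
   were not a CW-minimum, some move of the method would take p strictly below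
   f(p); by continuity the corresponding move from an iterate x^k close to p
   still does, and the greedy choice then gives f(x^{k+1}) < f(p), a
   contradiction. *)

Lemma cluster_seq_frequently {T : topologicalType} {u : nat -> T} {p : T}
    {B : set T} :
  cluster (u @ \oo) p -> nbhs p B -> forall K, exists2 k, (K <= k)%N & B (u k).
Proof.
move=> clp Bp K.
have tailK : (u @ \oo) (u @` [set k | (K <= k)%N]) by exists K => // k /= ?; exists k.
by have [_ [[k /= Kk <-] Buk]] := clp _ _ tailK Bp; exists k.
Qed.

Lemma cluster_nonincreasing_le {R : realType} {T : topologicalType}
    {G : T -> R} {u : nat -> T} {p : T} :
  (forall k, G (u k.+1) <= G (u k)) -> {for p, continuous G} ->
  cluster (u @ \oo) p -> forall k, G p <= G (u k).
Proof.
move=> /nonincreasing_seqP Gu Gp clp K; rewrite leNgt; apply/negP => GuK.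
have [k Kk] := cluster_seq_frequently clp (cvgr_gt _ Gp _ GuK) K.
by rewrite ltNge Gu.
Qed.

Section Rows.
Context {R : realType} {n : nat}.
Notation V := 'rV[R]_n.

Lemma norm0E (x : V) : norm0 x = #|supp x|.
Proof.
by apply: eq_card => i; rewrite /supp inE; apply/idP/idP => [/set_mem|/mem_set].
Qed.

Lemma near_supp_subset (p : V) : \forall z \near p, supp p \subset supp z.
Proof.
have coord_neq0 l : p ord0 l != 0 -> \forall z \near p, (z : V) ord0 l != 0.
  move=> pl; apply: (@coord_continuous R 1 n ord0 l p [set y | y != 0]).
  by apply: open_nbhs_nbhs; split; [exact: open_neq|].
have : \forall z \near p, forall l, p ord0 l != 0 -> (z : V) ord0 l != 0.
  apply: (@filter_forall _ _ (fun l (z : V) => p ord0 l != 0 -> z ord0 l != 0)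
    _ (nbhs_filter p)) => l.
  case: (eqVneq (p ord0 l) 0) => [pl|pl]; first by apply: nearW => z.
  by apply: filterS (coord_neq0 l pl) => z.
by apply: filterS => z supp_z; apply/fintype.subsetP => l; rewrite !inE; exact: supp_z.
Qed.

Lemma continuous_add_ebasis (j : 'I_n) (t : R) :
  continuous (fun z : V => z + t *: ebasis R j).
Proof.
move=> z; apply: cvgD; [exact: nbhs_filter|exact: cvg_id|].
exact: (@cvg_cst _ _ _ _ (nbhs_filter z)).
Qed.

Definition coord_swap (x : V) (i j : 'I_n) (t : R) : V :=
  x - x ord0 i *: ebasis R i + t *: ebasis R j.

Lemma continuous_coord_swap (i j : 'I_n) (t : R) :
  continuous (fun z => coord_swap z i j t).
Proof.
move=> z; apply: cvgD; [exact: nbhs_filter| |].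
- apply: cvgB; [exact: nbhs_filter|exact: cvg_id|].
  apply: cvgZr_tmp; [exact: nbhs_filter|exact: (@coord_continuous R 1 n ord0 i z)].
- exact: (@cvg_cst _ _ _ _ (nbhs_filter z)).
Qed.

End Rows.

Section GreedyStep.
Context {R : realType} {n : nat} {f : 'rV[R]_n -> R} {s : nat}.
Notation V := 'rV[R]_n.

Lemma greedy_step_le {x y : V} : greedy_step f s x y -> f y <= f x.
Proof.
rewrite /greedy_step; case: ifP => _.
  by move=> [i [t [_ ->]]]; case: ifP => // /ltW.
by case: ifP => // _ [i [j [t [_ [_ ->]]]]]; case: ifP => // /ltW.
Qed.

Lemma greedy_step_norm0_le {x y : V} : greedy_step f s x y -> (norm0 x <= s)%N.
Proof.
by rewrite /greedy_step; case: ltnP => [/ltnW //|_]; case: eqP => [->|].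
Qed.

Lemma greedy_step_le_add {x y : V} (j : 'I_n) (t : R) :
  greedy_step f s x y -> (norm0 x < s)%N -> f y <= f (x + t *: ebasis R j).
Proof.
move=> + lt; rewrite /greedy_step lt => -[i [u [umin ->]]].
case: ifP => [_|/negbT]; first exact: umin.
by rewrite -leNgt => /le_trans; apply.
Qed.

Lemma greedy_step_le_swap {x y : V} {i : 'I_n} (j : 'I_n) (t : R) :
  greedy_step f s x y -> norm0 x = s -> i \in supp x ->
  f y <= f (coord_swap x i j t).
Proof.
move=> + x_s; rewrite /greedy_step x_s ltnn eqxx => -[i0 [j0 [u [_ [umin ->]]]]] ix.
case: ifP => [_|/negbT]; first exact: umin.
by rewrite -leNgt => /le_trans; apply; exact: umin.
Qed.

End GreedyStep.

Section AccumulationPoint.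
Context {R : realType} {n s : nat} {f : 'rV[R]_n -> R}.
Context {x : nat -> 'rV[R]_n} {p : 'rV[R]_n}.
Hypothesis f_cont : continuous f.
Hypothesis x_step : forall k, greedy_step f s (x k) (x k.+1).
Hypothesis p_cluster : cluster (x @ \oo) p.
Notation V := 'rV[R]_n.

Lemma greedy_cluster_le k : f p <= f (x k).
Proof.
apply: cluster_nonincreasing_le p_cluster k => [k'|]; last exact: f_cont.
exact: greedy_step_le (x_step k').
Qed.

Lemma greedy_cluster_no_descent {P : V -> Prop} :
  (\forall z \near p, P z) -> ~ (forall k, P (x k) -> f (x k.+1) < f p).
Proof.
move=> Pp descent; have [k _ Pxk] := cluster_seq_frequently p_cluster Pp 0.
by have := descent k Pxk; rewrite ltNge greedy_cluster_le.
Qed.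

Lemma near_supp_norm0 : \forall z \near p, (norm0 p <= norm0 z)%N.
Proof.
near=> z; rewrite !norm0E subset_leq_card //; near: z; exact: near_supp_subset.
Unshelve. all: by end_near.
Qed.

Lemma greedy_cluster_norm0_le : (norm0 p <= s)%N.
Proof.
have [k _ pxk] := cluster_seq_frequently p_cluster near_supp_norm0 0.
exact: leq_trans pxk (greedy_step_norm0_le (x_step k)).
Qed.

Lemma near_comp_lt {g : V -> V} : continuous g ->
  f (g p) < f p -> \forall z \near p, f (g z) < f p.
Proof.
move=> g_cont lt_gp.
have fg : {for p, continuous (f \o g)} := continuous_comp (g_cont p) (@f_cont (g p)).
exact: cvgr_lt _ fg _ lt_gp.
Qed.

Lemma greedy_cluster_add_min (j : 'I_n) (t : R) :
  (norm0 p < s)%N -> f p <= f (p + t *: ebasis R j).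
Proof.
move=> p_lt; rewrite leNgt; apply/negP => descent.
have add_lt := near_comp_lt (continuous_add_ebasis j t) descent.
(* An iterate near p may already have s nonzeros; swapping out a coordinate
   outside supp p then approximates the addition move from p. *)
have swap_lt : \forall z \near p, forall l, l \notin supp p ->
    f (coord_swap z l j t) < f p.
  apply: (@filter_forall _ _ (fun l z => l \notin supp p ->
    f (coord_swap z l j t) < f p) _ (nbhs_filter p)).
  move=> l; case: (boolP (l \in supp p)) => [_|]; first exact: nearW.
  rewrite inE negbK => /eqP pl0.
  have := near_comp_lt (continuous_coord_swap l j t).
  rewrite /coord_swap pl0 scale0r subr0 => /(_ descent).
  by apply: filterS => z.
apply: (greedy_cluster_no_descent (filterI (filterI add_lt swap_lt) near_supp_norm0)).
move=> k [[add_k swap_k] p_xk].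
have := greedy_step_norm0_le (x_step k); rewrite leq_eqVlt => /orP[/eqP xk_s|xk_lt].
- have /fintype.subsetPn[l lxk lp] : ~~ (supp (x k) \subset supp p).
    by apply: contraTN p_lt => /subset_leq_card; rewrite -!norm0E xk_s -leqNgt.
  exact: le_lt_trans (greedy_step_le_swap j t (x_step k) xk_s lxk) (swap_k l lp).
- exact: le_lt_trans (greedy_step_le_add j t (x_step k) xk_lt) add_k.
Qed.

Lemma greedy_cluster_swap_min (i j : 'I_n) (t : R) :
  norm0 p = s -> i \in supp p -> f p <= f (coord_swap p i j t).
Proof.
move=> p_s ip; rewrite leNgt; apply/negP => descent.
have swap_lt := near_comp_lt (continuous_coord_swap i j t) descent.
apply: (greedy_cluster_no_descent (filterI swap_lt (near_supp_subset p))).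
move=> k [swap_k p_xk].
have xk_s : norm0 (x k) = s.
  apply/eqP; rewrite eqn_leq (greedy_step_norm0_le (x_step k)) /=.
  by rewrite -p_s !norm0E subset_leq_card.
have i_xk : i \in supp (x k) by exact: fintype.subsetP p_xk i ip.
exact: le_lt_trans (greedy_step_le_swap j t (x_step k) xk_s i_xk) swap_k.
Qed.

End AccumulationPoint.

Theorem theorem3p3 (R : realType) (n s : nat) (f : 'rV[R]_n -> R)
  (x : nat -> 'rV[R]_n) :
  C1 f ->
  (exists m : R, forall z, m <= f z) ->
  (0 < s < n)%N ->
  greedy_seq f s x ->
  forall p : 'rV[R]_n, cluster (x @ \oo) p -> CW_min f s p.
Proof.
move=> [f_diff _] _ _ [_ x_step] p p_cluster.
have f_cont : continuous f := fun z => differentiable_continuous (f_diff z).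
have := greedy_cluster_norm0_le x_step p_cluster.
rewrite leq_eqVlt => /orP[/eqP p_s|p_lt].
- right; split=> // i j t.
  exact: greedy_cluster_swap_min f_cont x_step p_cluster i j t p_s.
- left; split=> // j t.
  exact: greedy_cluster_add_min f_cont x_step p_cluster j t p_lt.
Qed.
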